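(* Let $\alpha\in(0,1)$ and $R>0$. A target moves with position $(0,y_T(t))$, $\dot y_T=1$, and an observer with position $(x_O(t),y_O(t))$, $\dot x_O=\alpha\cos\psi$, $\dot y_O=\alpha\sin\psi$. Suppose at time $t_2$ the target lies on the boundary of the observer's disk of radius $R$ with relative bearing $\lambda\in[-\pi,\pi]$, i.e. $\big(x_O(t_2),y_O(t_2)-y_T(t_2)\big)=R(\sin\lambda,\cos\lambda)$, and that for $t\ge t_2$ the observer uses the constant heading $\psi\equiv\cos^{-1}\!\left(\frac{(\alpha^2-1)\sin\lambda}{\alpha^2+2\alpha\cos\lambda+1}\right)$. Then for every $t$ with $t_2<t<t_2+\frac{2R(\alpha+\cos\lambda)}{1-\alpha^2}$ one has $x_O(t)^2+(y_O(t)-y_T(t))^2<R^2$; i.e. the target remains strictly inside the observation disk until the escape time $t_f=t_2+\frac{2R(\alpha+\cos\lambda)}{1-\alpha^2}$.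
   Context: The observation disk is the closed disk of radius $R$ centered at the observer; the target escapes when its distance to the observer exceeds $R$. Headings are measured counterclockwise from the positive $x$-axis. *)

From Stdlib Require Export Reals.
Open Scope R_scope.

Definition heading2 (alpha lam : R) : R :=
  acos (((alpha ^ 2 - 1) * sin lam) / (alpha ^ 2 + 2 * alpha * cos lam + 1)).

(* After time t2 the observer moves with constant velocity alpha (cos psi, sin psi) and the target
   with velocity (0, 1), so the relative position is affine in tau = t - t2.  The heading is chosen
   so that, with d = alpha^2 + 2 alpha cos lam + 1 > 0, the squared distance is
     R^2 + tau (1 - alpha^2) ((1 - alpha^2) tau - 2 R (alpha + cos lam)) / d,
   a quadratic in tau vanishing at 0 and at the escape time, hence below R^2 in between.  The time
   interval is nonempty only if alpha + cos lam > 0, and this is what makes sin psi the nonnegative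
   square root computed from acos. *)
From Stdlib Require Import Reals Lra.
Open Scope R_scope.

Lemma affine_of_derivable_pt_lim_const (f : R -> R) (v a b : R) :
  a <= b -> (forall u, a <= u <= b -> derivable_pt_lim f u v) ->
  f b = f a + v * (b - a).
Proof.
  intros [Hab | ->] Hf; [| lra].
  destruct (MVT_cor2 f (fun _ => v) a b Hab Hf) as [c [Hc _]].
  lra.
Qed.

Definition heading_denom (alpha lam : R) : R := alpha ^ 2 + 2 * alpha * cos lam + 1.

Lemma heading_denom_pos (alpha lam : R) :
  0 <= alpha -> alpha <> 1 -> 0 < heading_denom alpha lam.
Proof.
  intros Ha Ha1; unfold heading_denom.
  assert (Hc := COS_bound lam).
  assert (H1 : 0 < (1 - alpha)²) by (apply Rsqr_pos_lt; lra).
  unfold Rsqr in H1; nra.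
Qed.

(* The two heading components form a unit vector because d^2 = ((1 - alpha^2) sin lam)^2 + (2 alpha + (1 + alpha^2) cos lam)^2. *)
Lemma heading_components_unit (alpha lam : R) :
  heading_denom alpha lam <> 0 ->
  ((alpha ^ 2 - 1) * sin lam / heading_denom alpha lam) ^ 2
  + ((2 * alpha + (1 + alpha ^ 2) * cos lam) / heading_denom alpha lam) ^ 2 = 1.
Proof.
  intros Hd.
  assert (Hsc : sin lam ^ 2 = 1 - cos lam ^ 2)
    by (rewrite <- !Rsqr_pow2; apply sin2).
  field_simplify; [| exact Hd].
  rewrite Hsc; unfold heading_denom; field.
  exact Hd.
Qed.

Lemma cos_heading2 (alpha lam : R) :
  heading_denom alpha lam <> 0 ->
  cos (heading2 alpha lam) = (alpha ^ 2 - 1) * sin lam / heading_denom alpha lam.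
Proof.
  intros Hd.
  assert (Hu := heading_components_unit alpha lam Hd).
  set (k := (alpha ^ 2 - 1) * sin lam / heading_denom alpha lam) in *.
  set (s := (2 * alpha + (1 + alpha ^ 2) * cos lam) / heading_denom alpha lam) in *.
  assert (0 <= s ^ 2) by apply pow2_ge_0.
  apply cos_acos; nra.
Qed.

Lemma sin_heading2 (alpha lam : R) :
  0 < heading_denom alpha lam -> 0 <= 2 * alpha + (1 + alpha ^ 2) * cos lam ->
  sin (heading2 alpha lam)
  = (2 * alpha + (1 + alpha ^ 2) * cos lam) / heading_denom alpha lam.
Proof.
  intros Hd Hs.
  assert (Hu := heading_components_unit alpha lam (Rgt_not_eq _ _ Hd)).
  set (k := (alpha ^ 2 - 1) * sin lam / heading_denom alpha lam) in *.
  set (s := (2 * alpha + (1 + alpha ^ 2) * cos lam) / heading_denom alpha lam) in *.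
  assert (0 <= s) by (apply Rmult_le_pos; [exact Hs | apply Rlt_le, Rinv_0_lt_compat, Hd]).
  assert (0 <= s ^ 2) by apply pow2_ge_0.
  unfold heading2; fold (heading_denom alpha lam); fold k.
  rewrite sin_acos by nra.
  replace (1 - k²) with (s ^ 2) by (rewrite Rsqr_pow2; lra).
  apply sqrt_pow2; assumption.
Qed.

Lemma heading2_relative_dist2 (alpha R0 lam tau : R) :
  heading_denom alpha lam <> 0 ->
  (R0 * sin lam + alpha * ((alpha ^ 2 - 1) * sin lam / heading_denom alpha lam) * tau) ^ 2
  + (R0 * cos lam
     + (alpha * ((2 * alpha + (1 + alpha ^ 2) * cos lam) / heading_denom alpha lam) - 1) * tau) ^ 2
  = R0 ^ 2 + tau * (1 - alpha ^ 2) * ((1 - alpha ^ 2) * tau - 2 * R0 * (alpha + cos lam))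
             / heading_denom alpha lam.
Proof.
  intros Hd.
  assert (Hsc : sin lam ^ 2 + cos lam ^ 2 = 1)
    by (rewrite <- !Rsqr_pow2; apply sin2_cos2).
  apply Rminus_diag_uniq.
  transitivity ((sin lam ^ 2 + cos lam ^ 2 - 1)
                * (R0 + alpha * (alpha ^ 2 - 1) / heading_denom alpha lam * tau) ^ 2).
  - unfold heading_denom in *; field; exact Hd.
  - rewrite Hsc; ring.
Qed.

Theorem lemma2
  (alpha R0 lam t2 : R) (yT xO yO psi : R -> R)
  (Halpha : 0 < alpha < 1) (HR : 0 < R0)
  (Hlam : - PI <= lam <= PI)
  (HyT : forall t, derivable_pt_lim yT t 1)
  (HxO : forall t, derivable_pt_lim xO t (alpha * cos (psi t)))
  (HyO : forall t, derivable_pt_lim yO t (alpha * sin (psi t)))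
  (Hx2 : xO t2 = R0 * sin lam)
  (Hy2 : yO t2 - yT t2 = R0 * cos lam)
  (Hpsi : forall t, t2 <= t -> psi t = heading2 alpha lam) :
  forall t, t2 < t < t2 + 2 * R0 * (alpha + cos lam) / (1 - alpha ^ 2) ->
    xO t ^ 2 + (yO t - yT t) ^ 2 < R0 ^ 2.
Proof.
  intros t Ht.
  assert (Hd : 0 < heading_denom alpha lam) by (apply heading_denom_pos; lra).
  assert (Hq : 0 < 1 - alpha ^ 2) by nra.
  assert (Hbefore : (1 - alpha ^ 2) * (t - t2) < 2 * R0 * (alpha + cos lam)).
  { replace (2 * R0 * (alpha + cos lam))
      with ((1 - alpha ^ 2) * (2 * R0 * (alpha + cos lam) / (1 - alpha ^ 2))) by (field; lra).
    apply Rmult_lt_compat_l; lra. }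
  assert (Hac : 0 < alpha + cos lam) by nra.
  assert (Hx : xO t = xO t2 + alpha * cos (heading2 alpha lam) * (t - t2)).
  { apply affine_of_derivable_pt_lim_const; [lra |].
    intros u Hu; rewrite <- (Hpsi u) by lra; apply HxO. }
  assert (Hy : yO t - yT t
               = yO t2 - yT t2 + (alpha * sin (heading2 alpha lam) - 1) * (t - t2)).
  { apply (affine_of_derivable_pt_lim_const (fun u => yO u - yT u)); [lra |].
    intros u Hu; rewrite <- (Hpsi u) by lra; apply derivable_pt_lim_minus; auto. }
  assert (Hd0 : heading_denom alpha lam <> 0) by lra.
  assert (Hsin : 0 <= 2 * alpha + (1 + alpha ^ 2) * cos lam) by nra.
  rewrite Hx, Hy, Hx2, Hy2, cos_heading2, sin_heading2, heading2_relative_dist2 by assumption.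
  assert ((t - t2) * (1 - alpha ^ 2) * ((1 - alpha ^ 2) * (t - t2) - 2 * R0 * (alpha + cos lam))
          / heading_denom alpha lam < 0).
  { apply Rdiv_neg_pos; [apply Rmult_pos_neg |]; [apply Rmult_lt_0_compat | |]; lra. }
  lra.
Qed.
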